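(* Let $G$ be a finite simple graph with $n$ vertices and minimum degree $\delta \ge 24{,}000$. Then $$\gamma_s(G) \le \frac{\sqrt{6.8\ln(\delta+1)} + 0.32}{\sqrt{\delta+1}}\, n.$$
   Context: For a vertex $v$ of $G$, $N[v]$ denotes the closed neighbourhood of $v$ (i.e. $v$ together with its neighbours). A signed domination function of $G$ is a function $f: V(G) \to \{-1, 1\}$ such that $\sum_{x \in N[v]} f(x) \ge 1$ for every vertex $v \in V(G)$. The weight of $f$ is $f(V(G)) = \sum_{v \in V(G)} f(v)$. The signed domination number $\gamma_s(G)$ is the minimum weight of a signed domination function of $G$. *)

From mathcomp Require Import all_boot all_order all_algebra.
From mathcomp Require Import all_classical all_reals all_analysis.
Set Implicit Arguments. Unset Strict Implicit. Unset Printing Implicit Defensive.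
Import Order.TTheory GRing.Theory Num.Theory.
Local Open Scope ring_scope.

Definition simple_graph (V : finType) (e : rel V) : Prop :=
  symmetric e /\ irreflexive e.

Definition cnbhd (V : finType) (e : rel V) (v : V) : {set V} :=
  v |: [set u | e v u].

Definition deg (V : finType) (e : rel V) (v : V) : nat := #|[set u | e v u]|.

(* A function V -> {-1,1} is encoded as g : {ffun V -> bool}; true |-> 1, false |-> -1. *)
Definition sval (V : finType) (g : {ffun V -> bool}) (x : V) : int :=
  if g x then 1 else -1.

Definition signed_dom (V : finType) (e : rel V) (g : {ffun V -> bool}) : bool :=
  [forall v, 1 <= \sum_(x in cnbhd e v) sval g x].

Definition sweight (V : finType) (g : {ffun V -> bool}) : int :=
  \sum_(x : V) sval g x.

(* signed domination number: minimum weight over all signed domination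
   functions (the all-ones function is one, of weight #|V|, used as seed). *)
Definition gamma_s (V : finType) (e : rel V) : int :=
  \big[Order.min/(#|V|%:Z)]_(g : {ffun V -> bool} | signed_dom e g) sweight g.

From Pilot Require Import Defs.
From mathcomp Require Import all_boot all_order all_algebra.
From mathcomp Require Import all_classical all_reals all_analysis.
From mathcomp Require Import zify ring lra.
Import Order.TTheory GRing.Theory Num.Theory.
Set Implicit Arguments. Unset Strict Implicit.
Local Open Scope ring_scope.

(* Label each vertex -1 independently with probability (1 - x) / 2 and +1
   otherwise; the expected weight is x n.  A labelling fails to be signed
   dominating only at vertices whose closed neighbourhood contains more than
   deg v / 2 entries -1, and raising one such -1 costs 2 while lowering the total
   excess, so gamma_s <= weight + 2 * total excess.  The expected excess at v
   is bounded by an exponential moment with base q = (1 + x) / (1 - x), which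
   gives (1 + x)^2 (1 - x^2)^(deg v / 2) / (2x); for x = sqrt (6.8 ln D / D),
   D = delta + 1, this is at most 0.16 / sqrt D. *)

Section SignedDomination.
Variables (V : finType) (e : rel V).
Hypothesis simple_e : simple_graph e.
Implicit Types (g : {ffun V -> bool}) (u v y : V).

Definition negs (g : {ffun V -> bool}) (v : V) : nat :=
  #|[set y in cnbhd e v | ~~ g y]|.

Definition excess (g : {ffun V -> bool}) (v : V) : nat :=
  (negs g v - (deg e v)./2)%N.

Definition raise (g : {ffun V -> bool}) (y : V) : {ffun V -> bool} :=
  [ffun z => (z == y) || g z].

Lemma card_cnbhd v : #|cnbhd e v| = (deg e v).+1.
Proof. by rewrite cardsU1 inE simple_e.2. Qed.

Lemma sum_sval (A : {set V}) (g : {ffun V -> bool}) :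
  \sum_(x in A) Defs.sval g x = #|A|%:Z - 2 * #|[set y in A | ~~ g y]|%:Z.
Proof.
rewrite (eq_bigr (fun x => 1 - 2 * (~~ g x : nat)%:Z)); last first.
  by move=> x _; rewrite /Defs.sval; case: (g x).
rewrite big_split /= sumr_const sumrN -mulr_sumr natz.
rewrite (eq_bigr (fun x => if ~~ g x then 1 else 0)); last by move=> x _; case: (g x).
rewrite -big_mkcondr /= sumr_const !natz; congr (_ - _ * _%:Z).
by apply: eq_card => x; rewrite !inE.
Qed.

Lemma signed_dom_excess0 g : (forall v, excess g v = 0%N) -> signed_dom e g.
Proof.
move=> exc0; apply/forallP => v; rewrite sum_sval card_cnbhd.
move/eqP: (exc0 v); rewrite subn_eq0 -/(negs g v).
have := odd_double_half (deg e v); rewrite -mul2n; lia.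
Qed.

Lemma sweight_raise g y : g y = false -> sweight (raise g y) = sweight g + 2.
Proof.
move=> gy; rewrite /sweight (bigD1 y) // [in RHS](bigD1 y) //=.
rewrite (eq_bigr (Defs.sval g)) => [|x /negbTE xy]; last first.
  by rewrite /Defs.sval ffunE xy.
rewrite /Defs.sval ffunE eqxx gy /=; lia.
Qed.

Lemma negs_raise_le g y v : (negs (raise g y) v <= negs g v)%N.
Proof.
apply/subset_leq_card/fintype.subsetP => x; rewrite !inE ffunE.
by case: (x == y); rewrite ?andbF.
Qed.

Lemma negs_raise_lt g y v : y \in cnbhd e v -> g y = false ->
  (negs (raise g y) v < negs g v)%N.
Proof.
move=> yv gy; apply: proper_card; rewrite fintype.properE; apply/andP; split.
  by apply/fintype.subsetP => x; rewrite !inE ffunE; case: (x == y); rewrite ?andbF.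
apply/fintype.subsetPn; exists y; first by rewrite inE yv gy.
by rewrite inE ffunE eqxx andbF.
Qed.

Lemma sum_excess_raise_lt g y v : y \in cnbhd e v -> g y = false ->
  (0 < excess g v)%N -> (\sum_u excess (raise g y) u < \sum_u excess g u)%N.
Proof.
move=> yv gy exc_v; rewrite (bigD1 v) // [X in (_ < X)%N](bigD1 v) //=.
rewrite -addSn; apply: leq_add.
  by move: exc_v (negs_raise_lt yv gy); rewrite /excess; lia.
by apply: leq_sum => u _; move: (negs_raise_le g y u); rewrite /excess; lia.
Qed.

Lemma signed_dom_repair g : exists2 g', signed_dom e g' &
  sweight g' <= sweight g + 2 * (\sum_v excess g v)%:Z.
Proof.
have [n] := ubnP (\sum_v excess g v); elim: n g => // n IHn g.
have [exc0|] := boolP [forall v, excess g v == 0%N].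
  exists g; last by rewrite lerDl.
  by apply: signed_dom_excess0 => v; apply/eqP/(forallP exc0).
rewrite negb_forall => /existsP [v]; rewrite -lt0n => exc_v.
have /finset.set0Pn [y] : [set y in cnbhd e v | ~~ g y] != finset.set0.
  by apply: contraTneq exc_v => no_neg; rewrite /excess /negs no_neg finset.cards0.
rewrite inE => /andP [yv /negbTE gy] lt_n.
have lt_exc := sum_excess_raise_lt yv gy exc_v.
have [g' dom_g' le_g'] := IHn (raise g y) (leq_trans lt_exc lt_n).
exists g' => //; apply: (le_trans le_g'); rewrite sweight_raise //.
move: lt_exc; set a := (\sum_u _)%N; set b := (\sum_u _)%N; lia.
Qed.

Lemma gamma_s_le_sweight g : signed_dom e g -> gamma_s e <= sweight g.
Proof. exact: bigmin_le_cond. Qed.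

Lemma gamma_s_le_excess g :
  gamma_s e <= sweight g + 2 * (\sum_v excess g v)%:Z.
Proof.
have [g' /gamma_s_le_sweight] := signed_dom_repair g; exact: le_trans.
Qed.

End SignedDomination.

Section Averaging.
Variables (R : realType) (V : finType).
Implicit Types (p q : R) (g : {ffun V -> bool}) (v x : V).

(* [pweight p g] is the probability of [g] when each vertex is independently
   labelled -1 with probability [p]; expectations are weighted sums over all
   [g : {ffun V -> bool}]. *)
Definition pweight p g : R := \prod_i (if g i then 1 - p else p).

Lemma pweight_ge0 p g : 0 <= p <= 1 -> 0 <= pweight p g.
Proof. by case/andP=> p0 p1; apply: prodr_ge0 => i _; case: (g i); lra. Qed.

Lemma sum_pweight_prod p (h : V -> bool -> R) :
  \sum_g pweight p g * \prod_i h i (g i) =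
  \prod_i ((1 - p) * h i true + p * h i false).
Proof.
rewrite (eq_bigr (fun i => \sum_(b : bool) (if b then 1 - p else p) * h i b)).
  by rewrite bigA_distr_bigA; apply: eq_bigr => g _; rewrite big_split.
by move=> i _; rewrite big_bool.
Qed.

Lemma sum_pweight p : \sum_g pweight p g = 1.
Proof.
have := sum_pweight_prod p (fun _ _ => 1).
rewrite [RHS]big1 => [<-|i _]; last by rewrite !mulr1 subrK.
by apply: eq_bigr => g _; rewrite big1_eq mulr1.
Qed.

Lemma sum_pweight_sval p x :
  \sum_g pweight p g * (Defs.sval g x)%:~R = 1 - 2 * p.
Proof.
pose h i (b : bool) : R := if i == x then (if b then 1 else -1) else 1.
have sval_prod g : (Defs.sval g x)%:~R = \prod_i h i (g i).
  rewrite (bigD1 x) //= big1 => [|i /negbTE]; last by rewrite /h => ->.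
  by rewrite /h eqxx mulr1 /Defs.sval; case: (g x).
under eq_bigr do rewrite sval_prod.
rewrite sum_pweight_prod (bigD1 x) //= big1 => [|i /negbTE xi]; last first.
  by rewrite /h xi !mulr1 subrK.
by rewrite /h eqxx; lra.
Qed.

Lemma sum_pweight_sweight p :
  \sum_g pweight p g * (sweight g)%:~R = #|V|%:R * (1 - 2 * p).
Proof.
under eq_bigr do rewrite /sweight rmorph_sum mulr_sumr.
rewrite exchange_big /=; under eq_bigr do rewrite sum_pweight_sval.
rewrite sumr_const -[_ *+ #|_|]mulr_natl; congr (_%:R * _); exact: eq_card.
Qed.

Variable e : rel V.
Hypothesis simple_e : simple_graph e.

Lemma sum_pweight_expr_negs p q v :
  \sum_g pweight p g * q ^+ negs e g v = (1 - p + p * q) ^+ (deg e v).+1.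
Proof.
pose h i (b : bool) : R := if (i \in cnbhd e v) && ~~ b then q else 1.
have negs_prod g : q ^+ negs e g v = \prod_i h i (g i).
  rewrite -big_mkcond /= -prodr_const; by apply: eq_bigl => i; rewrite !inE.
under eq_bigr do rewrite negs_prod.
rewrite sum_pweight_prod (bigID [in cnbhd e v]) /=.
rewrite (big1 _ [pred i | i \notin cnbhd e v]) ?mulr1 => [|i /negbTE iN].
  rewrite -(card_cnbhd simple_e) -prodr_const; apply: eq_bigr => i iN.
  by rewrite /h iN /=; lra.
by rewrite /h iN !mulr1 subrK.
Qed.

End Averaging.

Section Bound.
Variables (R : realType) (V : finType) (e : rel V).
Hypothesis simple_e : simple_graph e.
Implicit Types (p q y : R).

Lemma expr1Dn_ge1Dx y n : 0 <= y -> 1 + y *+ n <= (1 + y) ^+ n.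
Proof.
move=> y0; elim: n => [|n IHn]; first by rewrite mulr0n addr0 expr0.
rewrite exprSr mulrSr; apply: le_trans (ler_wpM2r _ IHn); last lra.
have : 0 <= y *+ n by rewrite mulrn_wge0.
by move: (y *+ n) => m m0; nra.
Qed.

Lemma natrB_le_expr q k a : 1 < q ->
  (k - a)%:R <= q ^+ k / ((q - 1) * q ^+ a).
Proof.
move=> q1; have qa : 0 < (q - 1) * q ^+ a by rewrite mulr_gt0 ?exprn_gt0; lra.
have [le_ka|/ltnW le_ak] := leqP k a.
  by rewrite (eqP le_ka) divr_ge0 ?exprn_ge0 ?ltW //; lra.
have bernoulli : (k - a)%:R * (q - 1) <= q ^+ (k - a).
  have := @expr1Dn_ge1Dx (q - 1) (k - a).
  by rewrite (addrC 1 (q - 1)) subrK -mulr_natl; lra.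
rewrite ler_pdivlMr // -{2}(subnKC le_ak) exprD mulrA mulrC.
by rewrite ler_wpM2l ?exprn_ge0 //; lra.
Qed.

Lemma sum_pweight_excess p q v : 0 <= p <= 1 -> 1 < q ->
  \sum_g pweight p g * (excess e g v)%:R <=
  (1 - p + p * q) ^+ (deg e v).+1 / ((q - 1) * q ^+ (deg e v)./2).
Proof.
move=> p01 q1; rewrite -(sum_pweight_expr_negs simple_e) mulr_suml.
apply: ler_sum => g _; rewrite -mulrA ler_wpM2l ?pweight_ge0 //.
exact: natrB_le_expr.
Qed.

Lemma gamma_s_le_average p q : 0 <= p <= 1 -> 1 < q ->
  (gamma_s e)%:~R <= #|V|%:R * (1 - 2 * p) +
    2 * \sum_v (1 - p + p * q) ^+ (deg e v).+1 / ((q - 1) * q ^+ (deg e v)./2).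
Proof.
move=> p01 q1.
have -> : (gamma_s e)%:~R =
    \sum_(g : {ffun V -> bool}) pweight p g * (gamma_s e)%:~R :> R.
  by rewrite -mulr_suml sum_pweight mul1r.
apply: (@le_trans _ _ (\sum_g pweight p g *
    ((sweight g)%:~R + 2 * \sum_v (excess e g v)%:R))).
  apply: ler_sum => g _; rewrite ler_wpM2l ?pweight_ge0 //.
  apply: (@le_trans _ _ (sweight g + 2 * (\sum_v excess e g v)%:Z)%:~R).
    by rewrite ler_int gamma_s_le_excess.
  by rewrite rmorphD rmorphM /= sumMz.
under eq_bigr do rewrite mulrDr mulrCA mulr_sumr.
rewrite big_split /= sum_pweight_sweight lerD2l -mulr_sumr ler_pM2l ?ltr0n //.
by rewrite exchange_big /=; apply: ler_sum => v _; apply: sum_pweight_excess.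
Qed.

End Bound.

Section Estimates.
Variable R : realType.
Implicit Types (x y D : R).

Lemma moment_ratio_le x d : 0 < x < 1 ->
  (1 + x) ^+ d.+1 / (2 * x / (1 - x) * ((1 + x) / (1 - x)) ^+ d./2) <=
  (1 + x) ^+ 2 * (1 - x ^+ 2) ^+ d./2 / (2 * x).
Proof.
case/andP=> x0 x1; set a := d./2.
have le_a : (a <= d.+1)%N.
  by have := odd_double_half d; rewrite -/a -mul2n; lia.
have le_d : (d.+1 - a <= a + 2)%N.
  by have := odd_double_half d; rewrite -/a -mul2n; case: (odd d) => /=; lia.
have xp0 : 0 < (1 + x) ^+ a by rewrite exprn_gt0 //; lra.
have xm0 : 0 < (1 - x) ^+ a by rewrite exprn_gt0 //; lra.
have -> : (1 + x) ^+ d.+1 / (2 * x / (1 - x) * ((1 + x) / (1 - x)) ^+ a) =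
    (1 + x) ^+ (d.+1 - a) * ((1 - x) * (1 - x) ^+ a) / (2 * x).
  rewrite -{1}(subnK le_a) exprD expr_div_n.
  by field; rewrite !gt_eqF //; lra.
have -> : (1 + x) ^+ 2 * (1 - x ^+ 2) ^+ a = (1 + x) ^+ (a + 2) * (1 - x) ^+ a.
  rewrite (_ : 1 - x ^+ 2 = (1 + x) * (1 - x)) ?exprMn ?[in RHS]exprD; ring.
rewrite ler_pM2r ?invr_gt0 ?mulr_gt0 //; apply: ler_pM.
- by rewrite exprn_ge0 //; lra.
- by rewrite mulr_ge0 ?ltW //; lra.
- by rewrite ler_weXn2l //; lra.
- by rewrite ler_piMl ?ltW //; lra.
Qed.

Lemma ln_le_subr1 x : 0 < x -> ln x <= x - 1.
Proof. by move=> x0; have := expR_ge1Dx (ln x); rewrite lnK ?posrE // lerBrDr addrC. Qed.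

Lemma expr1B_le_expR y n : 0 <= y <= 1 -> (1 - y) ^+ n <= expR (- y * n%:R).
Proof.
case/andP=> y0 y1; rewrite expRM_natr lerXn2r ?nnegrE ?expR_ge0 ?subr_ge0 //.
by have := expR_ge1Dx (- y); rewrite addrC.
Qed.

Definition bias D := Num.sqrt (68 / 10 * ln D) / Num.sqrt D.

Lemma ln_ge_half D : 200 <= D -> 1 / 2 <= ln D.
Proof.
move=> D200; have D0 : 0 < D by lra.
have : D^-1 <= 1 / 2 by rewrite -(ler_pM2r D0) mulVf ?gt_eqF //; lra.
have := ln_le_subr1 (_ : 0 < D^-1); rewrite lnV ?posrE ?invr_gt0 //; lra.
Qed.

Lemma sqrt_ln_bounds D : 200 <= D ->
  1 <= Num.sqrt (68 / 10 * ln D) < Num.sqrt D.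
Proof.
move=> D200; have lnD := ln_ge_half D200; set t := Num.sqrt D.
have t_sqr : t ^+ 2 = D by rewrite sqr_sqrtr //; lra.
have t0 : 0 <= t := sqrtr_ge0 D.
have t14 : 14 <= t by nra.
have lnt : ln t <= t - 1 by apply: ln_le_subr1; lra.
have lnDt : ln D = 2 * ln t by rewrite -t_sqr lnXn ?mulr_natl //; lra.
rewrite -[X in X <= _ < _]sqrtr1 ler_sqrt ?ltr_sqrt; [apply/andP; split; nra|lra..].
Qed.

Lemma bias_gt0 D : 200 <= D -> 0 < bias D.
Proof. by case/sqrt_ln_bounds/andP => s1 st; rewrite divr_gt0; lra. Qed.

Lemma bias_lt1 D : 200 <= D -> bias D < 1.
Proof. by case/sqrt_ln_bounds/andP => s1 st; rewrite ltr_pdivrMr ?mul1r; lra. Qed.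

Lemma bias_tail_le D a : 200 <= D -> D <= 2 * a%:R + 2 ->
  (1 + bias D) ^+ 2 * (1 - bias D ^+ 2) ^+ a / bias D <= 32 / 100 / Num.sqrt D.
Proof.
move=> D200 le_D; have x0 := bias_gt0 D200; have x1 := bias_lt1 D200.
have /andP [s1 _] := sqrt_ln_bounds D200; have lnD := ln_ge_half D200.
set x := bias D in x0 x1 *.
have x_sqr : x ^+ 2 * D = 68 / 10 * ln D.
  rewrite /x /bias expr_div_n !sqr_sqrtr ?divfK ?gt_eqF //; lra.
have D0 : 0 < D by lra.
have tail : (1 - x ^+ 2) ^+ a <= D^-3.
  apply: le_trans (expr1B_le_expR _ _) _; first by rewrite sqr_ge0 /=; nra.
  rewrite -[D^-3]lnK ?posrE ?invr_gt0 ?exprn_gt0 // ler_expR.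
  rewrite lnV ?posrE ?exprn_gt0 // lnXn // mulNr lerN2 -mulr_natr.
  by rewrite -(ler_pM2r D0) mulrAC x_sqr; nra.
set u := D^-1; have u0 : 0 < u by rewrite invr_gt0.
have u_le : u <= 1 / 200 by rewrite -(ler_pM2r D0) mulVf ?gt_eqF //; lra.
have -> : 32 / 100 / Num.sqrt D = 32 / 100 * Num.sqrt (68 / 10 * ln D) * u / x.
  rewrite /x /bias /u; set s := Num.sqrt (68 / 10 * ln D) in s1 *.
  set t := Num.sqrt D.
  have t0 : 0 < t by rewrite sqrtr_gt0.
  have s0 : 0 < s by lra.
  rewrite -(sqr_sqrtr (ltW D0)) -/t; field; rewrite !gt_eqF //; lra.
rewrite ler_pM2r ?invr_gt0 //.
have E0 : 0 <= (1 - x ^+ 2) ^+ a by rewrite exprn_ge0 // subr_ge0; nra.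
have : (1 + x) ^+ 2 * (1 - x ^+ 2) ^+ a <= 4 * u ^+ 3.
  by rewrite /u exprVn ler_pM ?sqr_ge0 //; nra.
move/le_trans; apply; nra.
Qed.

End Estimates.

(* p = (1 - x) / 2 and q = (1 + x) / (1 - x) make 1 - 2 p = x and 1 - p + p q = 1 + x. *)
Lemma gamma_s_le_bias (R : realType) (V : finType) (e : rel V) (x : R) :
  simple_graph e -> 0 < x -> x < 1 ->
  (gamma_s e)%:~R <=
    #|V|%:R * x + \sum_v (1 + x) ^+ 2 * (1 - x ^+ 2) ^+ (deg e v)./2 / x.
Proof.
move=> simple_e x0 x1; have x01 : 0 < x < 1 by apply/andP.
have p01 : 0 <= (1 - x) / 2 <= 1 by apply/andP; split; lra.
have q1 : 1 < (1 + x) / (1 - x) by rewrite ltr_pdivlMr; lra.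
apply: le_trans (gamma_s_le_average simple_e p01 q1) _.
have -> : 1 - 2 * ((1 - x) / 2) = x by field.
have -> : 1 - (1 - x) / 2 + (1 - x) / 2 * ((1 + x) / (1 - x)) = 1 + x.
  by field; rewrite gt_eqF //; lra.
have -> : (1 + x) / (1 - x) - 1 = 2 * x / (1 - x).
  by field; rewrite gt_eqF //; lra.
rewrite lerD2l mulr_sumr; apply: ler_sum => v _.
apply: le_trans (ler_wpM2l _ (moment_ratio_le _ x01)) _ => //.
by rewrite le_eqVlt; apply/orP; left; apply/eqP; field; rewrite gt_eqF.
Qed.

Theorem corollary1 (R : realType) (V : finType) (e : rel V) (delta : nat) :
  simple_graph e ->
  (exists v : V, deg e v = delta) ->
  (forall v : V, (delta <= deg e v)%N) ->
  (24000 <= delta)%N ->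
  (gamma_s e)%:~R <=
    (Num.sqrt ((68 / 10) * ln (delta.+1%:R : R)) + 32 / 100)
      / Num.sqrt (delta.+1%:R) * (#|V|%:R).
Proof.
move=> simple_e _ min_deg delta_ge; set D : R := delta.+1%:R.
have D200 : 200 <= D by rewrite /D ler_nat ltnS (leq_trans _ delta_ge).
have x0 := bias_gt0 D200; have x1 := bias_lt1 D200; set x := bias D in x0 x1.
have tail_le v : (1 + x) ^+ 2 * (1 - x ^+ 2) ^+ (deg e v)./2 / x <=
    32 / 100 / Num.sqrt D.
  apply: le_trans (bias_tail_le D200 (_ : D <= 2 * (delta./2)%:R + 2)).
    rewrite ler_pM2r ?invr_gt0 // ler_wpM2l ?sqr_ge0 //.
    by apply: ler_wiXn2l; [nra | nra | exact: half_leq].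
  rewrite /D -natrM -natrD ler_nat.
  by have := odd_double_half delta; rewrite -mul2n; lia.
apply: le_trans (gamma_s_le_bias simple_e x0 x1) _.
have -> : (Num.sqrt (68 / 10 * ln D) + 32 / 100) / Num.sqrt D * #|V|%:R =
    #|V|%:R * x + #|V|%:R * (32 / 100 / Num.sqrt D) by rewrite /x /bias; ring.
rewrite lerD2l; apply: le_trans (ler_sum _ (fun v _ => tail_le v)) _.
by rewrite sumr_const -[_ *+ #|_|]mulr_natl (@eq_card _ xpredT V).
Qed.
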